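(* For any unit square graph $G$, if $\mathcal{B}=\{N[v]\mid v\in V(G)\}$, then NCTD$^+(\mathcal{B})\le 4$.
   Context: A unit square graph is the intersection graph of a finite family of axis-parallel unit squares in the plane. $N[v]$ is the closed neighborhood of $v$. A positive teaching map for $\mathcal{B}$ assigns to each $B\in\mathcal{B}$ a set $T(B)\subseteq B$. A vertex $w$ distinguishes $B,B'$ if $w$ lies in exactly one of them. $T$ is non-clashing if for all distinct $B,B'\in\mathcal{B}$ some $w\in T(B)\cup T(B')$ distinguishes them; its size is $\max_{B\in\mathcal{B}}|T(B)|$. NCTD$^+(\mathcal{B})$ is the minimum size of a positive non-clashing teaching map for $\mathcal{B}$. *)

From mathcomp Require Import all_boot all_order all_algebra.
From mathcomp Require Import boolp reals.
Set Implicit Arguments. Unset Strict Implicit. Unset Printing Implicit Defensive.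
Import Order.TTheory GRing.Theory Num.Theory.
Local Open Scope ring_scope.

(* A unit square graph: vertex set V (a finite type), each vertex v is the
   closed axis-parallel unit square with center c v = (x, y), i.e.
   [x - 1/2, x + 1/2] x [y - 1/2, y + 1/2]. *)
Definition unit_square (R : realType) (p : R * R) (q : R * R) : Prop :=
  p.1 - 1/2 <= q.1 <= p.1 + 1/2 /\ p.2 - 1/2 <= q.2 <= p.2 + 1/2.

Definition usq_adj (R : realType) (V : finType) (c : V -> R * R) (u v : V) : Prop :=
  u <> v /\ exists q : R * R, unit_square (c u) q /\ unit_square (c v) q.

Definition closed_nbhd (R : realType) (V : finType) (c : V -> R * R) (v : V) : {set V} :=
  [set u | `[< u = v \/ usq_adj c u v >]].

(* The family B = { N[v] | v in V(G) } (as a set of sets: duplicates collapse) *)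
Definition nbhd_family (R : realType) (V : finType) (c : V -> R * R) : {set {set V}} :=
  [set closed_nbhd c v | v : V].

Definition pos_nonclashing (V : finType) (F : {set {set V}})
    (T : {ffun {set V} -> {set V}}) : bool :=
  [forall B in F, T B \subset B] &&
  [forall B in F, forall B' in F,
     (B != B') ==> [exists w in T B :|: T B', (w \in B) != (w \in B')]].

Definition tm_size (V : finType) (F : {set {set V}}) (T : {ffun {set V} -> {set V}}) : nat :=
  (\max_(B in F) #|T B|)%N.

Lemma NCTDplus_exists (V : finType) (F : {set {set V}}) :
  exists k, [exists T, pos_nonclashing F T && (tm_size F T <= k)%N].
Proof.
exists (tm_size F [ffun B => B]); apply/existsP; exists [ffun B => B].
rewrite leqnn andbT; apply/andP; split.
  by apply/forall_inP => B _; rewrite ffunE.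
apply/forall_inP => B _; apply/forall_inP => B' _; apply/implyP => neq.
move: neq; apply: contraTT; rewrite negb_exists => /forallP H.
rewrite negbK; apply/eqP/setP => w; move: (H w); rewrite !ffunE in_setU.
by case: (w \in B); case: (w \in B').
Qed.

Definition NCTDplus (V : finType) (F : {set {set V}}) : nat :=
  ex_minn (NCTDplus_exists F).

From mathcomp Require Import all_boot all_order all_algebra.
From mathcomp Require Import boolp reals.
From mathcomp Require Import lra.
Set Implicit Arguments. Unset Strict Implicit. Unset Printing Implicit Defensive.
Import Order.TTheory GRing.Theory Num.Theory.
Local Open Scope ring_scope.

(* Two axis-parallel unit squares meet iff their centres are at Chebyshev
   distance at most 1, so N[v] is the intersection of four half-planes, bounding
   the coordinates x, -x, y, -y of the centres.  Teach each N[v] by one extreme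
   vertex in each of these four directions.  If w lies in B but not in B', then
   w violates one of the four half-planes of B', and the extreme vertex of B in
   that direction violates it as well, so it distinguishes B from B'. *)

Lemma NCTDplus_le (V : finType) (F : {set {set V}}) (T : {ffun {set V} -> {set V}}) k :
  pos_nonclashing F T -> (tm_size F T <= k)%N -> (NCTDplus F <= k)%N.
Proof.
move=> nc_T size_T; rewrite /NCTDplus; case: ex_minnP => m _; apply.
by apply/existsP; exists T; rewrite nc_T size_T.
Qed.

Section ExtremeTeaching.

Variables (R : realDomainType) (V : finType) (k : nat) (f : 'I_k -> V -> R).

Definition sublevel (t : 'I_k -> R) : {set V} := [set u | [forall i, f i u <= t i]].

Definition pick_max (i : 'I_k) (B : {set V}) : option V :=
  [pick w in B | [forall u in B, f i u <= f i w]].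

Definition extremes (B : {set V}) : {set V} := [set:: pmap (pick_max^~ B) (enum 'I_k)].

Lemma pick_maxP i (B : {set V}) w :
  w \in B -> exists2 a, pick_max i B = Some a & f i w <= f i a.
Proof.
move=> wB; rewrite /pick_max; case: pickP => [a /andP[_ /forall_inP max_a] | no_max].
  by exists a; last exact: max_a.
case: (arg_maxP (f i) wB) => a aB max_a.
by have /andP[] := negbT (no_max a); split; last by apply/forall_inP.
Qed.

Lemma mem_extremes i (B : {set V}) a : pick_max i B = Some a -> a \in extremes B.
Proof. by move=> max_a; rewrite inE mem_pmap; apply/mapP; exists i; rewrite ?mem_enum. Qed.

Lemma extremes_sub (B : {set V}) : extremes B \subset B.
Proof.
apply/subsetP => a; rewrite inE mem_pmap => /mapP[i _].
by rewrite /pick_max; case: pickP => // w /andP[wB _] [->].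
Qed.

Lemma card_extremes (B : {set V}) : (#|extremes B| <= k)%N.
Proof.
rewrite cardsE (leq_trans (card_size _)) // size_pmap.
by rewrite (leq_trans (count_size _ _)) // size_enum_ord.
Qed.

Lemma extremes_leave_sublevel (B : {set V}) t w :
  w \in B -> w \notin sublevel t -> exists2 a, a \in extremes B & a \notin sublevel t.
Proof.
move=> wB; rewrite inE negb_forall => /existsP[i]; rewrite -ltNge => t_lt_w.
have [a max_a w_le_a] := pick_maxP i wB.
exists a; first exact: mem_extremes max_a.
by rewrite inE negb_forall; apply/existsP; exists i; rewrite -ltNge (lt_le_trans t_lt_w).
Qed.

Variable F : {set {set V}}.
Hypothesis F_sublevel : {in F, forall B, exists t, B = sublevel t}.

Lemma extremes_pos_nonclashing : pos_nonclashing F [ffun B => extremes B].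
Proof.
apply/andP; split; first by apply/forall_inP => B _; rewrite ffunE extremes_sub.
apply/forall_inP => B FB; apply/forall_inP => B' FB'; apply/implyP => neqBB'.
have [w w_dist] : exists w, (w \in B) != (w \in B').
  apply/existsP; move: neqBB'; apply: contraNT; rewrite negb_exists => /forallP same.
  by apply/eqP/setP => w; apply/eqP; rewrite -[_ == _]negbK same.
have teach X X' : X \in F -> X' \in F -> w \in X -> w \notin X' ->
    exists2 a, a \in extremes X & (a \in X) != (a \in X').
  move=> _ /F_sublevel[t ->] wX wX'.
  have [a aE at'] := extremes_leave_sublevel wX wX'.
  by exists a; rewrite // (negbTE at') (subsetP (extremes_sub X)).
rewrite !ffunE; case wB: (w \in B) w_dist; case wB': (w \in B') => // _.
  have [a aE dist] := teach B B' FB FB' wB (negbT wB').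
  by apply/existsP; exists a; rewrite in_setU aE.
have [a aE dist] := teach B' B FB' FB wB' (negbT wB); apply/existsP; exists a.
by rewrite in_setU aE orbT eq_sym.
Qed.

Lemma NCTDplus_sublevel_family : (NCTDplus F <= k)%N.
Proof.
apply: (NCTDplus_le extremes_pos_nonclashing).
by apply/bigmax_leqP => B _; rewrite ffunE card_extremes.
Qed.

End ExtremeTeaching.

Section UnitSquares.

Variables (R : realType) (V : finType) (c : V -> R * R).

Lemma mem_closed_nbhd u v : (u \in closed_nbhd c v) =
  (`|(c u).1 - (c v).1| <= 1) && (`|(c u).2 - (c v).2| <= 1).
Proof.
rewrite inE; apply/asboolP/andP.
- case=> [->|[_ [q [[/andP[? ?] /andP[? ?]] [/andP[? ?] /andP[? ?]]]]]].
    by rewrite !subrr normr0 ler01.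
  by rewrite !ler_norml; split; apply/andP; split; lra.
- rewrite !ler_norml => -[/andP[? ?] /andP[? ?]].
  have [-> | neq_uv] := eqVneq u v; [by left | right; split; first exact/eqP].
  exists (((c u).1 + (c v).1) / 2, ((c u).2 + (c v).2) / 2).
  by split; split; apply/andP; split => /=; lra.
Qed.

Definition square_dirs (i : 'I_4) (u : V) : R :=
  match val i with 0 => (c u).1 | 1 => - (c u).1 | 2 => (c u).2 | _ => - (c u).2 end.

Lemma closed_nbhd_sublevel v :
  closed_nbhd c v = sublevel square_dirs (fun i => square_dirs i v + 1).
Proof.
apply/setP => u; rewrite mem_closed_nbhd inE !ler_norml /square_dirs.
apply/idP/forallP => [/andP[/andP[? ?] /andP[? ?]] [[|[|[|[|//]]]] ?] /= | dirs]; try lra.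
have := dirs (@Ordinal 4 0 isT); have := dirs (@Ordinal 4 1 isT).
have := dirs (@Ordinal 4 2 isT); have := dirs (@Ordinal 4 3 isT).
by rewrite /= => ? ? ? ?; apply/andP; split; apply/andP; split; lra.
Qed.

End UnitSquares.

Theorem theorem8 (R : realType) (V : finType) (c : V -> R * R) :
  (NCTDplus (nbhd_family c) <= 4)%N.
Proof.
apply: (@NCTDplus_sublevel_family R V 4 (square_dirs c)).
move=> B /imsetP[v _ ->]; exists (fun i => square_dirs c i v + 1).
exact: closed_nbhd_sublevel.
Qed.
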